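(* Let $\Delta$ be a simplicial polytopal fan in $\mathbb{R}^d$ with ray generators $\mathbf{v}_1,\ldots,\mathbf{v}_n$ and let $m\ge1$. Let $\Delta^m$ be the polyhedral fan in $\mathbb{R}^{m\times d}$ whose cells are the products $\sigma_1\times\cdots\times\sigma_m$ with $\sigma_j\in\Delta$ (the $j$-th factor constraining the $j$-th row). Let $\Upsilon$ be the collection of all closed cones $\overline{U_G}$, $G\in\mathcal{G}$, such that $G$ has no matching of size $n$. Then $\Upsilon$ is a polyhedral subcomplex of $\Delta^m$.
   Context: A fan is simplicial if every cone is generated by linearly independent vectors; polytopal if it is the normal fan of a polytope. For $\mathbf{u}\in\mathbb{R}^d$, with $\sigma$ the cone of $\Delta$ containing $\mathbf{u}$ in its relative interior and $\mathbf{u}=\sum_{k\in I_\sigma}\lambda_k\mathbf{v}_k$ over the generators of $\sigma$, set $[\mathbf{u}]_i=\lambda_i$ for $i\in I_\sigma$ and $0$ otherwise. For $U\in\mathbb{R}^{m\times d}$ with rows $\mathbf{u}^{(1)},\ldots,\mathbf{u}^{(m)}$, $G_U$ is the bipartite graph on $[n]\sqcup[m]$ with $i\in[n]$ adjacent to $j\in[m]$ iff $[\mathbf{u}^{(j)}]_i>0$. $\mathcal{G}$ is the set of graphs of the form $G_U$, and for $G\in\mathcal{G}$, $U_G=\{U\in\mathbb{R}^{m\times d}\colon G_U=G\}$; one has $U_{G_U}=\operatorname{relint}\sigma(\mathbf{u}^{(1)})\times\cdots\times\operatorname{relint}\sigma(\mathbf{u}^{(m)})$, where $\sigma(\mathbf{u})$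 is the cone of $\Delta$ containing $\mathbf{u}$ in its relative interior, and the closures $\overline{U_G}$ are exactly the cells of $\Delta^m$. *)

From HB Require Import structures.
From mathcomp Require Import all_boot all_order all_algebra.
From mathcomp Require Import reals.
Set Implicit Arguments. Unset Strict Implicit. Unset Printing Implicit Defensive.
Import Order.TTheory GRing.Theory Num.Theory.
Local Open Scope ring_scope.

Section Defs.
Variables (R : realType) (d n : nat).
Implicit Types (v : 'I_n -> 'rV[R]_d) (Delta : {set {set 'I_n}}).

Definition dotr (u w : 'rV[R]_d) : R := \sum_(k < d) u 0 k * w 0 k.

Definition gcone v (S : {set 'I_n}) : 'rV[R]_d -> Prop :=
  fun u => exists lam : 'I_n -> R,
    (forall i, 0 <= lam i) /\ u = \sum_(i in S) lam i *: v i.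

(* relative interior of a convex set C (algebraic/core definition, which
   coincides with the relative interior for convex sets in R^d) *)
Definition relint (C : 'rV[R]_d -> Prop) : 'rV[R]_d -> Prop :=
  fun x => C x /\ forall y, C y -> exists e : R, 0 < e /\ C (x + e *: (x - y)).

Definition simplicial_fan v Delta : Prop :=
  (forall S : {set 'I_n}, S \in Delta -> forall lam : 'I_n -> R,
      \sum_(i in S) lam i *: v i = 0 -> forall i, i \in S -> lam i = 0) /\
  (* closed under faces (faces of simplicial cones = subsets of generators) *)
  (forall S T : {set 'I_n}, S \in Delta -> T \subset S -> T \in Delta) /\
  (forall S T : {set 'I_n}, S \in Delta -> T \in Delta ->
      forall u, (gcone v S u /\ gcone v T u) <-> gcone v (S :&: T) u) /\
  (forall i, [set i] \in Delta).

(* normal cone of a nonempty subset A of the finite point set W of the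
   polytope conv(W): vectors u maximized (over conv W) on all of A *)
Definition normal_cone (W A : seq 'rV[R]_d) : 'rV[R]_d -> Prop :=
  fun u => forall a w, a \in A -> w \in W -> dotr u w <= dotr u a.

(* Delta is the normal fan of the polytope conv(W) for some finite W *)
Definition polytopal v Delta : Prop :=
  exists W : seq 'rV[R]_d,
    (forall S : {set 'I_n}, S \in Delta -> exists A : seq 'rV[R]_d,
        A != [::] /\ {subset A <= W} /\
        forall u, gcone v S u <-> normal_cone W A u) /\
    (forall A : seq 'rV[R]_d, A != [::] -> {subset A <= W} ->
        exists S : {set 'I_n}, S \in Delta /\ forall u, gcone v S u <-> normal_cone W A u).

(* [u]_i > 0 : with sigma the cone of Delta containing u in its relative
   interior and u = sum_{k in I_sigma} lambda_k v_k, we have lambda_i > 0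
   (and i in I_sigma) *)
Definition coord_pos v Delta (u : 'rV[R]_d) (i : 'I_n) : Prop :=
  exists S : {set 'I_n}, S \in Delta /\ exists lam : 'I_n -> R,
    relint (gcone v S) u /\ u = \sum_(k in S) lam k *: v k /\
    i \in S /\ 0 < lam i.

Variable m : nat.

(* G_U = G : the bipartite graph G (edges (i,j), i in [n], j in [m]) is G_U *)
Definition graph_of v Delta (U : 'M[R]_(m, d)) (G : {set 'I_n * 'I_m}) : Prop :=
  forall i j, (i, j) \in G <-> coord_pos v Delta (row j U) i.

Definition in_calG v Delta (G : {set 'I_n * 'I_m}) : Prop :=
  exists U, graph_of v Delta U G.

Definition U_of v Delta (G : {set 'I_n * 'I_m}) : 'M[R]_(m, d) -> Prop :=
  fun U => graph_of v Delta U G.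

Definition has_matching (G : {set 'I_n * 'I_m}) (k : nat) : Prop :=
  exists M : {set 'I_n * 'I_m},
    M \subset G /\ #|M| = k /\
    {in M &, forall e f, e.1 = f.1 -> e = f} /\
    {in M &, forall e f, e.2 = f.2 -> e = f}.

Definition mclosure (A : 'M[R]_(m, d) -> Prop) : 'M[R]_(m, d) -> Prop :=
  fun X => forall e : R, 0 < e ->
    exists Y, A Y /\ forall i j, `|X i j - Y i j| < e.

Definition mdot (Y X : 'M[R]_(m, d)) : R := \sum_i \sum_j Y i j * X i j.

Definition seteq (A B : 'M[R]_(m, d) -> Prop) : Prop := forall X, A X <-> B X.

Definition cell_prod v Delta (C : 'M[R]_(m, d) -> Prop) : Prop :=
  exists S : 'I_m -> {set 'I_n}, (forall j, S j \in Delta) /\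
    seteq C (fun U => forall j, gcone v (S j) (row j U)).

Definition is_face (F C : 'M[R]_(m, d) -> Prop) : Prop :=
  exists Y : 'M[R]_(m, d), (forall X, C X -> 0 <= mdot Y X) /\
    seteq F (fun X => C X /\ mdot Y X = 0).

Definition Upsilon v Delta (C : 'M[R]_(m, d) -> Prop) : Prop :=
  exists G, in_calG v Delta G /\ ~ has_matching G n /\
    seteq C (mclosure (U_of v Delta G)).

Definition subcomplex v Delta (Y : ('M[R]_(m, d) -> Prop) -> Prop) : Prop :=
  (forall C, Y C -> cell_prod v Delta C) /\
  (forall C F, Y C -> is_face F C -> Y F).

End Defs.

From HB Require Import structures.
From mathcomp Require Import all_boot all_order all_algebra.
From mathcomp Require Import reals.
From mathcomp Require Import lra.
Import Order.TTheory GRing.Theory Num.Theory.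
Local Open Scope ring_scope.
Set Implicit Arguments. Unset Strict Implicit. Unset Printing Implicit Defensive.

(* Write S_j(G) for the neighbourhood of the column vertex j in G.  Because
   the fan is simplicial, the cone containing u in its relative interior is
   unique and [u]_i > 0 exactly for its generators, and because it is a
   (complete) normal fan every u lies in such a cone; hence U_G is the product
   of the relative interiors of the cones cone(S_j(G)), and its closure is the
   cell prod_j cone(S_j(G)) of Delta^m (normal cones are closed).  A functional
   defining a face of this cell is nonnegative on every generator of every
   factor, so the face is again a product prod_j cone(T_j) with
   T_j = S_j(G) minus the generators on which it is positive.  This is the
   closure of U_G' for the subgraph G' of G with neighbourhoods T_j, and a
   subgraph of a graph without a matching of size n has none either. *)

Lemma has_matching0 n m (G : {set 'I_n * 'I_m}) : has_matching G 0.
Proof.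
by exists set0; rewrite sub0set cards0; do 2!split=> //; split=> e f; rewrite inE.
Qed.

Lemma has_matching_subset n m (G H : {set 'I_n * 'I_m}) k :
  G \subset H -> has_matching G k -> has_matching H k.
Proof. by move=> GH [M [MG M_match]]; exists M; split=> //; apply: subset_trans GH. Qed.

Section Cones.
Variables (R : realType) (d : nat).
Implicit Types (x y z : 'rV[R]_d).

Lemma ler_sum_term (I : finType) (P : pred I) (F : I -> R) i :
  P i -> (forall j, P j -> 0 <= F j) -> F i <= \sum_(j | P j) F j.
Proof.
move=> Pi F_ge0; rewrite (bigD1 i) //= lerDl sumr_ge0 // => j /andP[Pj _].
exact: F_ge0.
Qed.

Lemma sum_support_subset (V : nmodType) (I : finType) (S T : {set I}) (F : I -> V) :
  T \subset S -> (forall k, k \in S -> k \notin T -> F k = 0) ->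
  \sum_(k in S) F k = \sum_(k in T) F k.
Proof.
move=> TS F0; rewrite (big_setID T) /= (setIidPr TS) [X in _ + X]big1 ?addr0 //.
by move=> k; rewrite inE => /andP[kT kS]; apply: F0.
Qed.

Lemma dotr_is_linear x : linear_for *%R (dotr x).
Proof.
move=> a y z; rewrite /dotr mulr_sumr -big_split /=; apply: eq_bigr => k _.
by rewrite !mxE mulrDr mulrCA.
Qed.

HB.instance Definition _ x :=
  GRing.isLinear.Build R 'rV[R]_d R *%R (dotr x) (dotr_is_linear x).

Lemma dotrC x y : dotr x y = dotr y x.
Proof. by apply: eq_bigr => k _; rewrite mulrC. Qed.

Lemma dotr_le_norm z x e :
  (forall l, `|x 0 l| <= e) -> dotr z x <= e * \sum_l `|z 0 l|.
Proof.
move=> x_le; rewrite /dotr mulr_sumr; apply: ler_sum => l _.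
by rewrite (le_trans (ler_norm _)) // normrM mulrC ler_wpM2r.
Qed.

Lemma mdot_rows m (Y X : 'M[R]_(m, d)) :
  mdot Y X = \sum_j dotr (row j Y) (row j X).
Proof. by apply: eq_bigr => i _; apply: eq_bigr => k _; rewrite !mxE. Qed.

Lemma mclosure_sub m (A B : 'M[R]_(m, d) -> Prop) :
  (forall X, A X -> B X) -> forall X, mclosure A X -> mclosure B X.
Proof. by move=> AB X clX e /clX[Y [/AB BY XY]]; exists Y. Qed.

Lemma mclosure_row m (P : 'I_m -> 'rV[R]_d -> Prop) X j :
  mclosure (fun X => forall i, P i (row i X)) X -> mclosure (P j) (row j X).
Proof.
by move=> clX e /clX[Y [PY XY]]; exists (row j Y); split=> // i l; rewrite !mxE.
Qed.

Lemma mclosure_shift m (A : 'M[R]_(m, d) -> Prop) X M :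
  (forall t, 0 < t -> A (X + t *: M)) -> mclosure A X.
Proof.
move=> AXM e e_gt0; pose K := \sum_i \sum_l `|M i l|.
have K_ge0 : 0 <= K by do 2!apply: sumr_ge0 => ? _.
have t_gt0 : 0 < e / (1 + K) by apply: divr_gt0; lra.
exists (X + (e / (1 + K)) *: M); split; first exact: AXM.
move=> i l; rewrite !mxE opprD addNKr normrN normrM (gtr0_norm t_gt0).
have MK : `|M i l| <= K.
  rewrite /K (bigD1 i) //= (bigD1 l) //= -addrA lerDl.
  by rewrite addr_ge0 // sumr_ge0 // => *; rewrite sumr_ge0.
rewrite mulrAC ltr_pdivrMr; last lra.
nra.
Qed.

Lemma dotr_closed z x : mclosure (fun y => dotr z y <= 0) x -> dotr z x <= 0.
Proof.
move=> clx; rewrite leNgt; apply/negP => zx_gt0; pose K := \sum_l `|z 0 l|.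
have K_ge0 : 0 <= K by apply: sumr_ge0.
have e_gt0 : 0 < dotr z x / (1 + K) by apply: divr_gt0; lra.
have [y [zy_le0 xy]] := clx _ e_gt0.
have : dotr z (x - y) <= dotr z x / (1 + K) * K.
  by apply: dotr_le_norm => l; rewrite !mxE; apply/ltW/xy.
rewrite linearB /= mulrAC ler_pdivlMr; last lra.
nra.
Qed.

Lemma normal_cone_closed (W A : seq 'rV[R]_d) x :
  mclosure (normal_cone W A) x -> normal_cone W A x.
Proof.
move=> clx a w aA wW; rewrite -subr_le0 -linearB /= dotrC.
apply: dotr_closed; apply: mclosure_sub clx => y Ny.
by rewrite dotrC linearB subr_le0 Ny.
Qed.

Lemma exists_argmax_seq (T : eqType) (f : T -> R) (s : seq T) :
  s != [::] -> exists2 a, a \in s & {in s, forall b, f b <= f a}.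
Proof.
elim: s => // b [|c s] IH _.
  by exists b; rewrite ?mem_head // => _ /[1!inE] /eqP->.
have [a a_in a_max] := IH isT.
have [ba | ab] := leP (f b) (f a).
  exists a; first by rewrite inE a_in orbT.
  by move=> w /[1!inE] /predU1P[-> | /a_max].
exists b; first exact: mem_head.
by move=> w /[1!inE] /predU1P[-> // | /a_max/le_trans]; apply; apply: ltW.
Qed.

Variables (n : nat) (v : 'I_n -> 'rV[R]_d).
Implicit Types (S T : {set 'I_n}) (lam mu : 'I_n -> R).

Lemma gcone_subset S T x : T \subset S -> gcone v T x -> gcone v S x.
Proof.
move=> TS [lam [lam_ge0 ->]].
exists (fun k => if k \in T then lam k else 0); split; first by move=> k; case: ifP.
rewrite (sum_support_subset TS) => [|k _ /negbTE->]; last exact: scale0r.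
by apply: eq_bigr => k ->.
Qed.

Lemma gcone0 S : gcone v S 0.
Proof. by exists (fun=> 0); split=> //; rewrite big1 // => k _; rewrite scale0r. Qed.

Lemma gcone_gen S k : k \in S -> gcone v S (v k).
Proof.
move=> kS; apply: gcone_subset (_ : [set k] \subset S) _; first by rewrite sub1set.
by exists (fun=> 1); split=> //; rewrite big_set1 scale1r.
Qed.

Lemma dotr_comb y S lam :
  dotr y (\sum_(k in S) lam k *: v k) = \sum_(k in S) lam k * dotr y (v k).
Proof. by rewrite linear_sum; apply: eq_bigr => k _; rewrite linearZ. Qed.

Lemma dotr_gcone_ge0 S y x :
  {in S, forall k, 0 <= dotr y (v k)} -> gcone v S x -> 0 <= dotr y x.
Proof.
move=> y_ge0 [lam [lam_ge0 ->]]; rewrite dotr_comb sumr_ge0 // => k kS.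
by rewrite mulr_ge0 ?y_ge0.
Qed.

Lemma dotr_gcone_eq0 S y x :
  {in S, forall k, 0 <= dotr y (v k)} -> gcone v S x ->
  dotr y x = 0 <-> gcone v (S :&: [set k | dotr y (v k) == 0]) x.
Proof.
move=> y_ge0 [lam [lam_ge0 ->]]; rewrite dotr_comb; split=> [yx0 | [mu [_ x_mu]]].
  have {}yx0 := psumr_eq0P (fun k kS => mulr_ge0 (lam_ge0 k) (y_ge0 k kS)) yx0.
  exists lam; split=> //; apply: sum_support_subset => [|k kS]; first exact: subsetIl.
  rewrite !inE kS /= => yvk; move/eqP: (yx0 k kS).
  by rewrite mulf_eq0 (negbTE yvk) orbF => /eqP->; rewrite scale0r.
rewrite -dotr_comb x_mu dotr_comb big1 // => k /[!inE] /andP[_ /eqP->].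
exact: mulr0.
Qed.

Lemma relint_gcone_pos S lam :
  {in S, forall k, 0 < lam k} -> relint (gcone v S) (\sum_(k in S) lam k *: v k).
Proof.
move=> lam_gt0; split.
  exists (fun k => if k \in S then lam k else 0); split.
    by move=> k; case: ifP => // /lam_gt0/ltW.
  by apply: eq_bigr => k ->.
move=> _ [mu [mu_ge0 ->]]; pose K := \sum_(k in S) mu k / lam k.
have K_ge0 : 0 <= K.
  by apply: sumr_ge0 => k kS; rewrite divr_ge0 // ltW // lam_gt0.
have K1_gt0 : 0 < 1 + K by lra.
have e_gt0 : 0 < (1 + K)^-1 by rewrite invr_gt0.
exists (1 + K)^-1; split=> //.
exists (fun k => if k \in S then lam k + (1 + K)^-1 * (lam k - mu k) else 0); split.
  move=> k; case: ifP => kS //; have lk := lam_gt0 k kS.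
  have muK : mu k / lam k <= K.
    apply: (ler_sum_term (F := fun k => mu k / lam k)) => // j jS.
    by rewrite divr_ge0 // ltW // lam_gt0.
  have mu_le : mu k * (1 + K)^-1 <= lam k.
    by rewrite ler_pdivrMr // in muK; rewrite ler_pdivrMr //; nra.
  have := mulr_gt0 e_gt0 lk; rewrite mulrC in mu_le; lra.
rewrite -sumrB scaler_sumr -big_split /=; apply: eq_bigr => k kS.
by rewrite kS -scalerBl scalerA -scalerDl.
Qed.

Lemma gcone_shift_relint S x t :
  gcone v S x -> 0 < t -> relint (gcone v S) (x + t *: \sum_(k in S) v k).
Proof.
move=> [lam [lam_ge0 ->]] t_gt0; rewrite scaler_sumr -big_split /=.
rewrite (eq_bigr (fun k => (lam k + t) *: v k)) => [|k _]; last by rewrite scalerDl.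
by apply: relint_gcone_pos => k _; have := lam_ge0 k; lra.
Qed.

Variable Delta : {set {set 'I_n}}.
Hypothesis hfan : simplicial_fan v Delta.

Lemma fan_subset S T : S \in Delta -> T \subset S -> T \in Delta.
Proof. by case: hfan => _ [+ _]; apply. Qed.

Lemma fan_coef_uniq S lam mu : S \in Delta ->
  \sum_(k in S) lam k *: v k = \sum_(k in S) mu k *: v k -> {in S, lam =1 mu}.
Proof.
case: hfan => indep _ SD lam_mu k kS; apply/eqP; rewrite -subr_eq0; apply/eqP.
apply: (indep S SD (fun k => lam k - mu k)) kS.
by under eq_bigr do rewrite scalerBl; rewrite sumrB lam_mu subrr.
Qed.

Lemma relint_gcone_coef S x : S \in Delta -> relint (gcone v S) x ->
  exists2 lam, {in S, forall k, 0 < lam k} & x = \sum_(k in S) lam k *: v k.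
Proof.
move=> SD [[lam [lam_ge0 ->]] xS]; exists lam => // k kS.
(* Moving from \sum_k v k through x stays in the cone only if every
   coefficient of x is positive. *)
have [e [e_gt0 [mu [mu_ge0 x_mu]]]] :=
  xS (\sum_(k in S) 1 *: v k) (ex_intro _ (fun=> 1) (conj (fun=> ler01) erefl)).
have : lam k + e * (lam k - 1) = mu k.
  apply: (fan_coef_uniq (lam := fun k => lam k + e * (lam k - 1)) SD _ kS).
  rewrite -x_mu -sumrB scaler_sumr -big_split /=; apply: eq_bigr => i _.
  by rewrite -scalerBl scalerA -scalerDl.
have := mu_ge0 k; have := lam_ge0 k; nra.
Qed.

Lemma relint_gcone_subset S T x : S \in Delta -> T \in Delta ->
  relint (gcone v S) x -> gcone v T x -> S \subset T.
Proof.
move=> SD TD xS xT; have [lam lam_gt0 x_lam] := relint_gcone_coef SD xS.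
have [_ [_ [meet _]]] := hfan.
have [mu [_ x_mu]] := (meet S T SD TD x).1 (conj xS.1 xT).
pose mu' k := if k \in T then mu k else 0.
have lam_mu : {in S, lam =1 mu'}.
  apply: fan_coef_uniq SD _; rewrite -x_lam x_mu [RHS](sum_support_subset (subsetIl S T)).
  - by apply: eq_bigr => k /setIP[_ kT]; rewrite /mu' kT.
  - by move=> k kS; rewrite inE kS /= /mu' => /negbTE->; rewrite scale0r.
apply/subsetP => k kS; move: (lam_gt0 k kS); rewrite lam_mu // /mu'.
by case: (k \in T) => //; rewrite ltxx.
Qed.

Lemma coord_posE T x i : T \in Delta -> relint (gcone v T) x ->
  coord_pos v Delta x i <-> i \in T.
Proof.
move=> TD xT; split=> [[S [SD [lam [xS [_ [iS _]]]]]] | iT].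
  exact: subsetP (relint_gcone_subset SD TD xS xT.1) i iS.
have [lam lam_gt0 x_lam] := relint_gcone_coef TD xT.
by exists T; split=> //; exists lam; do !split=> //; apply: lam_gt0.
Qed.

Hypothesis hpoly : polytopal v Delta.
Hypothesis n_gt0 : (0 < n)%N.

Lemma fan_complete x : exists2 S, S \in Delta & gcone v S x.
Proof.
have [W [cone_normal normal_cone_fan]] := hpoly.
have [_ [_ [_ rays]]] := hfan.
have [A [A_neq0 [AW _]]] := cone_normal _ (rays (Ordinal n_gt0)).
have W_neq0 : W != [::].
  by case: A A_neq0 AW => // a A _ /(_ a (mem_head _ _)); case: (W).
have [a aW a_max] := exists_argmax_seq (dotr x) W_neq0.
have aW1 : {subset [:: a] <= W} by move=> _ /[1!inE] /eqP->.
have [S [SD Sa]] := normal_cone_fan [:: a] isT aW1.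
by exists S => //; apply/Sa => _ w /[1!inE] /eqP-> /a_max.
Qed.

Lemma fan_complete_relint x : exists2 T, T \in Delta & relint (gcone v T) x.
Proof.
have [S SD [lam [lam_ge0 x_lam]]] := fan_complete x.
pose T := [set k in S | 0 < lam k].
have TS : T \subset S by apply/subsetP => k /[!inE] /andP[].
exists T; first exact: fan_subset SD TS.
rewrite x_lam (sum_support_subset TS) => [|k kS].
  by apply: relint_gcone_pos => k /[!inE] /andP[].
rewrite inE kS /= -leNgt => lam_le0.
have -> : lam k = 0 by apply/le_anti; rewrite lam_le0 lam_ge0.
exact: scale0r.
Qed.

Lemma gcone_closed S x : S \in Delta -> mclosure (gcone v S) x -> gcone v S x.
Proof.
have [W [cone_normal _]] := hpoly; move=> SD clx.
have [A [_ [_ SA]]] := cone_normal S SD.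
by apply/SA/normal_cone_closed; apply: mclosure_sub clx => y /SA.
Qed.

Variable m : nat.

Definition nbhd (G : {set 'I_n * 'I_m}) j : {set 'I_n} := [set i | (i, j) \in G].

Definition graph_of_nbhds (N : 'I_m -> {set 'I_n}) : {set 'I_n * 'I_m} :=
  [set ij | ij.1 \in N ij.2].

Lemma nbhd_graph_of_nbhds (N : 'I_m -> {set 'I_n}) j : nbhd (graph_of_nbhds N) j = N j.
Proof. by apply/setP => i; rewrite !inE. Qed.

Lemma nbhd_graph_of U G j T : graph_of v Delta U G -> T \in Delta ->
  relint (gcone v T) (row j U) -> nbhd G j = T.
Proof.
move=> UG TD UT; apply/setP => i; rewrite inE.
by apply/idP/idP => [/UG/(coord_posE _ TD UT) | /(coord_posE _ TD UT)/UG].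
Qed.

Lemma in_calG_nbhd G j : in_calG v Delta G -> nbhd G j \in Delta.
Proof.
move=> [U UG]; have [T TD UT] := fan_complete_relint (row j U).
by rewrite (nbhd_graph_of UG TD UT).
Qed.

Lemma U_of_prod_relint G X : (forall j, nbhd G j \in Delta) ->
  U_of v Delta G X <-> forall j, relint (gcone v (nbhd G j)) (row j X).
Proof.
move=> GD; split=> [XG j | XG i j].
  have [T TD XT] := fan_complete_relint (row j X).
  by rewrite (nbhd_graph_of XG TD XT).
by apply: iff_sym; have := coord_posE i (GD j) (XG j); rewrite inE.
Qed.

Lemma in_calG_graph_of_nbhds (N : 'I_m -> {set 'I_n}) :
  (forall j, N j \in Delta) -> in_calG v Delta (graph_of_nbhds N).
Proof.
move=> ND; exists (\matrix_j \sum_(k in N j) 1 *: v k).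
have GD j : nbhd (graph_of_nbhds N) j \in Delta by rewrite nbhd_graph_of_nbhds.
apply/(U_of_prod_relint _ GD) => j; rewrite rowK nbhd_graph_of_nbhds.
by apply: relint_gcone_pos => k _; apply: ltr01.
Qed.

Lemma mclosure_U_ofE G X : (forall j, nbhd G j \in Delta) ->
  mclosure (U_of v Delta G) X <-> forall j, gcone v (nbhd G j) (row j X).
Proof.
move=> GD; split=> [clX j | XG].
  have clrel := mclosure_sub (fun Y => (U_of_prod_relint Y GD).1) clX.
  apply: gcone_closed (GD j) _.
  have := @mclosure_row _ (fun j => relint (gcone v (nbhd G j))) X j clrel.
  by apply: mclosure_sub => y [].
apply: mclosure_sub (fun Y => (U_of_prod_relint Y GD).2) _ _.
apply: (mclosure_shift (M := \matrix_j \sum_(k in nbhd G j) v k)) => t t_gt0 j.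
by rewrite linearD linearZ /= rowK; apply: gcone_shift_relint.
Qed.

Lemma is_face_prod_gcone (S : 'I_m -> {set 'I_n}) (C F : 'M[R]_(m, d) -> Prop) :
  seteq C (fun X => forall j, gcone v (S j) (row j X)) -> is_face F C ->
  exists2 T : 'I_m -> {set 'I_n}, (forall j, T j \subset S j) &
    seteq F (fun X => forall j, gcone v (T j) (row j X)).
Proof.
move=> CS [Y [Y_ge0 FY]].
have Yv_ge0 j : {in S j, forall k, 0 <= dotr (row j Y) (v k)}.
  move=> k kS; pose X : 'M[R]_(m, d) := \matrix_i (if i == j then v k else 0).
  have rowX i : row i X = if i == j then v k else 0 by rewrite rowK.
  have := Y_ge0 X; rewrite mdot_rows (bigD1 j) //= big1 => [|i /negbTE ij].
    rewrite rowX eqxx addr0; apply; apply/CS => i; rewrite rowX.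
    by case: eqP => [->|_]; [apply: gcone_gen | apply: gcone0].
  by rewrite rowX ij linear0.
exists (fun j => S j :&: [set k | dotr (row j Y) (v k) == 0]) => [j | X].
  exact: subsetIl.
rewrite FY CS mdot_rows; split=> [[XS XY0] j | XT].
  have dotr_ge0 i (_ : true) := dotr_gcone_ge0 (Yv_ge0 i) (XS i).
  exact/(dotr_gcone_eq0 (Yv_ge0 j) (XS j))/(psumr_eq0P dotr_ge0 XY0).
have XS j : gcone v (S j) (row j X) by apply: gcone_subset (XT j); apply: subsetIl.
split=> //; rewrite big1 // => j _.
exact/(dotr_gcone_eq0 (Yv_ge0 j) (XS j)).
Qed.

Lemma Upsilon_cell (C : 'M[R]_(m, d) -> Prop) :
  Upsilon v Delta C -> cell_prod v Delta C.
Proof.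
move=> [G [inG [_ CG]]]; have GD j := in_calG_nbhd j inG.
by exists (nbhd G); split=> // X; apply: iff_trans (CG X) (mclosure_U_ofE X GD).
Qed.

Lemma Upsilon_face (C F : 'M[R]_(m, d) -> Prop) :
  Upsilon v Delta C -> is_face F C -> Upsilon v Delta F.
Proof.
move=> [G [inG [noM CG]]] faceF; have GD j := in_calG_nbhd j inG.
have CN X := iff_trans (CG X) (mclosure_U_ofE X GD).
have [N NS FN] := is_face_prod_gcone CN faceF.
have ND j : N j \in Delta := fan_subset (GD j) (NS j).
have GN j : nbhd (graph_of_nbhds N) j \in Delta by rewrite nbhd_graph_of_nbhds.
exists (graph_of_nbhds N); split; first exact: in_calG_graph_of_nbhds.
split.
  apply: contra_not noM; apply: has_matching_subset.
  by apply/subsetP => -[i j] /[!inE] /(subsetP (NS j)); rewrite inE.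
move=> X; rewrite FN mclosure_U_ofE //.
by split=> XN j; move: (XN j); rewrite nbhd_graph_of_nbhds.
Qed.

End Cones.

Theorem lemma3p9 (R : realType) (d n m : nat) (v : 'I_n -> 'rV[R]_d)
  (Delta : {set {set 'I_n}}) :
  simplicial_fan v Delta -> polytopal v Delta -> (0 < m)%N ->
  subcomplex v Delta (Upsilon (m := m) v Delta).
Proof.
move=> hfan hpoly _; have [n0 | n_gt0] := posnP n.
  by split=> [C | C F] [G [_ [+ _]]]; rewrite [X in has_matching _ X]n0;
    case; apply: has_matching0.
by split=> [C | C F]; [apply: Upsilon_cell | apply: Upsilon_face].
Qed.
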